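(* Let $f:\mathbb{R}^n\times\mathbb{R}^m\to\mathbb{R}^n$ be smooth with $f(0,0)=0$, and suppose $f$ is affine in the input, i.e. $f(x,u)=f_0(x)+g(x)u$ for smooth $f_0:\mathbb{R}^n\to\mathbb{R}^n$ and $g:\mathbb{R}^n\to\mathbb{R}^{n\times m}$. Let $X\subset\mathbb{R}^n$, $U\subset\mathbb{R}^m$, $P\subset\mathbb{R}^n$ be bounded open sets containing the origin, with $U$ convex, and suppose there is $\bar h>0$ such that for every $x_0\in X$ and $u_0\in U$ the initial-value problem $\dot x(t)=f(x(t),u_0)$, $x(0)=x_0$, has a unique solution $\phi(t;x_0,u_0)$ on $0\le t\le \bar h$. Let $Q\in\mathbb{R}^{n\times n}$ be positive semidefinite and $R\in\mathbb{R}^{m\times m}$ positive definite. For a sampling period $h\in(0,\bar h]$ define the Hamiltonian $$H(x,u,p^+)=\phi(h;x,u)^{\mathrm T}p^+ + h\,x^{\mathrm T}Qx + h\,u^{\mathrm T}Ru .$$ Then for all sufficiently small $h>0$, the function $u\mapsto H(x,u,p^+)$ is convex on $U$ for every $(x,p^+)\in X\times P$.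
   Context: $\phi(t;x_0,u_0)$ denotes the state at time $t$ of the plant $\dot x=f(x,u)$ started at $x_0$ with the input held constant at $u_0$ (it is smooth in $(t,x_0,u_0)$). This Hamiltonian arises from the sampled-data optimal control problem of minimizing $\sum_{k\ge0}(h x[k]^{\mathrm T}Qx[k]+h u[k]^{\mathrm T}Ru[k])$ subject to $x[k+1]=\phi(h;x[k],u[k])$. *)

From HB Require Import structures.
From mathcomp Require Import all_boot all_order all_algebra.
From mathcomp Require Import all_classical all_reals all_analysis.
Set Implicit Arguments. Unset Strict Implicit. Unset Printing Implicit Defensive.
Import Order.TTheory GRing.Theory Num.Theory.
Import numFieldNormedType.Exports.
Local Open Scope classical_set_scope.
Local Open Scope ring_scope.

Fixpoint iter_dirder (R : realType) (V W : normedModType R)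
    (vs : seq V) (F : V -> W) : V -> W :=
  match vs with
  | [::] => F
  | v :: vs' => fun x => 'D_v (iter_dirder vs' F) x
  end.

(* F is smooth (C^infinity) on the whole space: every iterated directional
   derivative exists everywhere and is continuous.  (In finite dimension this
   is equivalent to being C^infinity.) *)
Definition smooth (R : realType) (V W : normedModType R) (F : V -> W) : Prop :=
  forall vs : seq V,
    (forall v x, derivable (iter_dirder vs F) x v) /\
    continuous (iter_dirder vs F).

Definition qform (R : realType) (k : nat) (A : 'M[R]_k) (x : 'cV[R]_k) : R :=
  (x^T *m A *m x) 0 0.

Definition dotcv (R : realType) (k : nat) (a b : 'cV[R]_k) : R :=
  (a^T *m b) 0 0.

Definition psd (R : realType) (k : nat) (A : 'M[R]_k) : Prop :=
  A^T = A /\ forall x : 'cV[R]_k, 0 <= qform A x.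

Definition pd (R : realType) (k : nat) (A : 'M[R]_k) : Prop :=
  A^T = A /\ forall x : 'cV[R]_k, x != 0 -> 0 < qform A x.

Definition convex_set_in (R : realType) (V : lmodType R) (A : set V) : Prop :=
  forall x y (l : R), A x -> A y -> 0 <= l <= 1 -> A (l *: x + (1 - l) *: y).

Definition convex_fun_on (R : realType) (V : lmodType R) (A : set V)
    (F : V -> R) : Prop :=
  forall x y (l : R), A x -> A y -> 0 <= l <= 1 ->
    F (l *: x + (1 - l) *: y) <= l * F x + (1 - l) * F y.

Definition ode_solution (R : realType) (n : nat)
    (F : 'cV[R]_n -> 'cV[R]_n) (x0 : 'cV[R]_n) (T : R) (y : R -> 'cV[R]_n) : Prop :=
  y 0 = x0 /\
  {within `[0, T], continuous y} /\
  (forall t, 0 < t < T -> is_derive t 1 y (F (y t))).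

Definition hamiltonian (R : realType) (n m : nat)
    (phi : R -> 'cV[R]_n -> 'cV[R]_m -> 'cV[R]_n)
    (Q : 'M[R]_n) (Rw : 'M[R]_m) (h : R)
    (x : 'cV[R]_n) (u : 'cV[R]_m) (p : 'cV[R]_n) : R :=
  dotcv (phi h x u) p + h * qform Q x + h * qform Rw u.

From HB Require Import structures.
From mathcomp Require Import all_boot all_order all_algebra.
From mathcomp Require Import all_classical all_reals all_analysis.
From mathcomp Require Import ring lra.
Import Order.TTheory GRing.Theory Num.Theory.
Import numFieldNormedType.Exports.
Local Open Scope classical_set_scope.
Local Open Scope ring_scope.
Set Implicit Arguments. Unset Strict Implicit. Unset Printing Implicit Defensive.

(* Fix x and p+ and write w = l u + (1 - l) v.  The convexity defect of
   u |-> H(x, u, p+) along this segment is the sum of the control-cost part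
   h l (1 - l) (u - v)^T R (u - v) >= h r l (1 - l) |u - v|^2 and of the flow part
   <l phi_u + (1 - l) phi_v - phi_w, p+>, where phi_u = phi(h; x, u).  For small h
   every trajectory stays in a fixed ball around X, trajectories for u and v stay
   O(t |u - v|) apart, and the defect l phi_u + (1 - l) phi_v - phi_w satisfies a
   linear differential inequality whose forcing term is O(l (1 - l) |u - v|^2 h),
   by second-order bounds on the smooth maps f0 and g.  Hence the flow part is
   O(l (1 - l) |u - v|^2 h^2) and is dominated by the control cost once h is small. *)

Section MatrixNorm.
Variable R : realType.

Lemma mx_entry_le_norm p q (M : 'M[R]_(p, q)) i j : `|M i j| <= `|M|.
Proof.
rewrite [leRHS]/Num.Def.normr /= mx_normrE.
exact: le_trans (le_bigmax _ _ (i, j)).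
Qed.

Lemma mx_norm_le p q (M : 'M[R]_(p, q)) c :
  0 <= c -> (forall i j, `|M i j| <= c) -> `|M| <= c.
Proof.
move=> c0 HM; rewrite [leLHS]/Num.Def.normr /= mx_normrE.
by apply: bigmax_le => // -[i j] _; exact: HM.
Qed.

Lemma trmx_norm p q (M : 'M[R]_(p, q)) : `|M^T| = `|M|.
Proof.
apply/le_anti/andP; split; apply: mx_norm_le => // i j.
  by rewrite mxE; exact: mx_entry_le_norm.
by have := mx_entry_le_norm M^T j i; rewrite mxE.
Qed.

Lemma mulmx_norm_le p k q (A : 'M[R]_(p, k)) (B : 'M[R]_(k, q)) :
  `|A *m B| <= k%:R * `|A| * `|B|.
Proof.
apply: mx_norm_le; first by rewrite !mulr_ge0.
move=> i j; rewrite mxE; apply: le_trans (ler_norm_sum _ _ _) _.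
rewrite -mulrA mulr_natl -[k in _ *+ k]card_ord -sumr_const.
by apply: ler_sum => l _; rewrite normrM ler_pM // mx_entry_le_norm.
Qed.

Lemma dotcv_norm_le n (a b : 'cV[R]_n) : `|dotcv a b| <= n%:R * `|a| * `|b|.
Proof.
apply: le_trans (mx_entry_le_norm _ 0 0) _.
by rewrite -(trmx_norm a); exact: mulmx_norm_le.
Qed.

Lemma convex_comb_norm_le p q (a b : 'M[R]_(p, q)) rho l :
  0 <= l <= 1 -> `|a| <= rho -> `|b| <= rho -> `|l *: a + (1 - l) *: b| <= rho.
Proof.
move=> /andP[l0 l1] ha hb; have l1' : 0 <= 1 - l by rewrite subr_ge0.
apply: le_trans (ler_normD _ _) _.
rewrite !normrZ (ger0_norm l0) (ger0_norm l1').
have -> : rho = l * rho + (1 - l) * rho by ring.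
by apply: lerD; exact: ler_wpM2l.
Qed.

Lemma trmx_continuous p q : continuous (fun M : 'M[R]_(p, q) => M^T).
Proof.
move=> M A /= /nbhs_ballP [e e0 HA]; apply/nbhs_ballP; exists e => // N.
rewrite -ball_normE /ball_ /= => hN; apply: HA.
by rewrite -ball_normE /ball_ /= -linearB /= trmx_norm.
Qed.

End MatrixNorm.

Section Compactness.
Variable R : realType.

Lemma bounded_set_norm_le (V : normedModType R) (A : set V) :
  bounded_set A -> exists2 r, 0 <= r & forall x, A x -> `|x| <= r.
Proof.
move=> /ex_strict_bound_gt0[r r0 Ar]; exists r => [|x /Ar /ltW //].
exact: ltW.
Qed.

Lemma continuous_sum (T : topologicalType) (I : finType) (f : I -> T -> R) :
  (forall i, continuous (f i)) -> continuous (fun x => \sum_i f i x).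
Proof.
move=> fc; rewrite -fct_sumE; apply: (big_ind (fun F : T -> R => continuous F)).
- exact: cst_continuous.
- by move=> F G Fc Gc x; apply: continuousD; [exact: Fc | exact: Gc].
- by move=> i _; exact: fc.
Qed.

Lemma continuous_bounded_on_ball (V : normedModType R) n (F : 'cV[R]_n -> V) rho :
  continuous F -> exists2 C, 0 <= C & forall y, `|y| <= rho -> `|F y| <= C.
Proof.
move=> Fc.
pose K := [set v : 'rV[R]_n | forall i, `[- rho, rho]%classic (v ord0 i)].
have Kc : compact K.
  exact: (@rV_compact _ n (fun=> `[- rho, rho]%classic) (fun=> @segment_compact _ _ _)).
have FKc : compact ((F \o trmx) @` K).
  apply: continuous_compact Kc; apply: continuous_subspaceT => v.
  by apply: continuous_comp; [exact: trmx_continuous | exact: Fc].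
have [C C0 HC] := bounded_set_norm_le (compact_bounded FKc).
exists C => // y hy; apply: HC; exists y^T; last by rewrite /= trmxK.
move=> i /=; rewrite mxE in_itv /= -ler_norml.
exact: le_trans (mx_entry_le_norm _ _ _) hy.
Qed.

Lemma continuous_family_bounded_on_ball (V : normedModType R) (I : finType) n
    (G : I -> 'cV[R]_n -> V) rho :
  (forall i, continuous (G i)) ->
  exists2 C, 0 <= C & forall i y, `|y| <= rho -> `|G i y| <= C.
Proof.
move=> Gc.
have [|C C0 HC] := continuous_bounded_on_ball rho (F := fun y => \sum_i `|G i y|).
  apply: continuous_sum => i y.
  by apply: continuous_comp; [exact: Gc | exact: norm_continuous].
exists C => // i y /HC; apply: le_trans.
by rewrite ger0_norm ?sumr_ge0 // (bigD1 i) //= lerDl sumr_ge0.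
Qed.

End Compactness.

Section QuadraticForms.
Variable R : realType.

Lemma qformE m (A : 'M[R]_m) x : qform A x = \sum_i \sum_j x i 0 * A i j * x j 0.
Proof.
rewrite /qform mxE; under eq_bigr do rewrite mxE big_distrl.
rewrite exchange_big; apply: eq_bigr => i _; apply: eq_bigr => j _.
by rewrite !mxE.
Qed.

Lemma qformZ m (A : 'M[R]_m) k x : qform A (k *: x) = k ^+ 2 * qform A x.
Proof.
rewrite !qformE mulr_sumr; apply: eq_bigr => i _; rewrite mulr_sumr.
by apply: eq_bigr => j _; rewrite !mxE; ring.
Qed.

Lemma qform_convex_comb m (A : 'M[R]_m) u v l :
  l * qform A u + (1 - l) * qform A v - qform A (l *: u + (1 - l) *: v)
  = l * (1 - l) * qform A (u - v).
Proof.
rewrite !qformE !pair_big /= !mulr_sumr -big_split -sumrB /=.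
by apply: eq_bigr => i _; rewrite !mxE; ring.
Qed.

Lemma qform_continuous m (A : 'M[R]_m) : continuous (qform A).
Proof.
have -> : qform A = fun x => \sum_i \sum_j x i 0 * A i j * x j 0.
  by apply/funext => x; exact: qformE.
apply: continuous_sum => i; apply: continuous_sum => j x.
apply: (@continuousM _ _ (fun x : 'cV[R]_m => x i 0 * A i j) (fun x => x j 0)).
  apply: (@continuousM _ _ (fun x : 'cV[R]_m => x i 0) (fun=> A i j)).
    exact: coord_continuous.
  exact: cst_continuous.
exact: coord_continuous.
Qed.

Lemma pd_coercive m (A : 'M[R]_m) :
  pd A -> exists2 r, 0 < r & forall d, r * `|d| ^+ 2 <= qform A d.
Proof.
case: m A => [A _|m A [_ Apd]].
  by exists 1 => // d; rewrite flatmx0 /qform mulmx0 mxE normr0 expr0n mulr0.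
pose S := [set v : 'rV[R]_m.+1 | `|v| = 1].
have Sc : compact S.
  apply: bounded_closed_compact.
    by exists 1; split => // M M1 v /= ->; exact: ltW.
  apply: (@preimage_closed _ _ (fun v : 'rV[R]_m.+1 => `|v|) [set x | x = 1]).
    by move=> v _; exact: norm_continuous.
  exact: closed_eq.
have S0 : S !=set0.
  exists (delta_mx 0 0); apply/le_anti/andP; split.
    by apply: mx_norm_le => // i j; rewrite mxE; case: (_ && _); rewrite ?normr1 ?normr0.
  by have := mx_entry_le_norm (delta_mx 0 0 : 'rV[R]_m.+1) 0 0; rewrite mxE !eqxx normr1.
have qc : {within S, continuous (fun v : 'rV[R]_m.+1 => qform A v^T)}.
  apply: continuous_subspaceT => v.
  by apply: continuous_comp; [exact: trmx_continuous | exact: qform_continuous].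
have [c] := compact_EVT_min S0 Sc qc; rewrite inE /S /= => c1 cmin.
exists (qform A c^T).
  apply: Apd; apply/eqP => c0; move: c1.
  by rewrite -trmx_norm c0 normr0 => /eqP; rewrite eq_sym oner_eq0.
move=> d; have [->|d0] := eqVneq d 0.
  by rewrite normr0 expr0n mulr0 /qform mulmx0 mxE.
have dn0 : 0 < `|d|^-1 ^+ 2 by rewrite exprn_gt0 // invr_gt0 normr_gt0.
rewrite -(ler_pM2l dn0) mulrA mulrAC -exprMn mulVf ?normr_eq0 // expr1n mul1r.
have := cmin (`|d|^-1 *: d)^T; rewrite trmxK qformZ; apply.
by rewrite inE /S /= trmx_norm normrZ normfV normr_id mulVf // normr_eq0.
Qed.

Lemma dotcvE n (a b : 'cV[R]_n) : dotcv a b = \sum_i a i 0 * b i 0.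
Proof. by rewrite /dotcv mxE; apply: eq_bigr => i _; rewrite mxE. Qed.

Lemma dotcv_convex_comb n (a b c p : 'cV[R]_n) l :
  dotcv (l *: a + (1 - l) *: b - c) p
  = l * dotcv a p + (1 - l) * dotcv b p - dotcv c p.
Proof.
rewrite !dotcvE !mulr_sumr -big_split -sumrB /=.
by apply: eq_bigr => i _; rewrite !mxE; ring.
Qed.

End QuadraticForms.

Section MeanValue.
Variable R : realType.

Lemma is_derive_along_line n (W : normedModType R) (F : 'cV[R]_n -> W) x d s :
  derivable F (x + s *: d) d ->
  is_derive s 1 (fun t : R => F (x + t *: d)) ('D_d F (x + s *: d)).
Proof.
have E : (fun t : R => t^-1 *: (((fun r : R => F (x + r *: d)) \o shift s) (t *: 1)
                                - F (x + s *: d)))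
  = (fun t : R => t^-1 *: ((F \o shift (x + s *: d)) (t *: d) - F (x + s *: d))).
  apply/funext => t /=; congr (_ *: (F _ - _)).
  by rewrite [t *: 1]mulr1 scalerDl addrCA addrC.
move=> Fd; split; first by rewrite /derivable /= E.
by rewrite /derive /= E.
Qed.

Lemma is_derive_mx_entry (V : normedModType R) p q (M : V -> 'M[R]_(p, q)) t v dM i j :
  is_derive t v M dM -> is_derive t v (fun x => M x i j) (dM i j).
Proof.
move=> [Md <-]; split; first by move/derivable_mxP: Md; apply.
by rewrite derive_mx // mxE.
Qed.

Lemma mvt_along_line n p q (F : 'cV[R]_n -> 'M[R]_(p, q)) x d s i j :
  (forall t : R, derivable F (x + t *: d) d) ->
  exists2 th : R, 0 <= th <= 1 &
    (F (x + s *: d) - F x) i j = s * ('D_d F (x + (th * s) *: d)) i j.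
Proof.
move=> Fd.
pose psi (t : R) := F (x + t *: d) i j.
have psid (t : R) : is_derive t 1 psi (('D_d F (x + t *: d)) i j).
  exact/is_derive_mx_entry/is_derive_along_line.
have psic (a b : R) : {within `[a, b], continuous psi}.
  by apply: derivable_within_continuous => t _; exact: (psid t).(ex_derive).
rewrite !mxE (_ : F x i j = psi 0); last by rewrite /psi scale0r addr0.
case: (ltgtP s 0) => [s0|s0|->]; last by exists 0; rewrite ?lexx ?ler01 // subrr !mul0r.
- have [c /andP[] + + E] := MVT_segment (ltW s0) (fun t _ => psid t) (psic _ _).
  rewrite !bnd_simp => cs c0; exists (c / s).
    by rewrite mulr_le0 ?invr_le0 ?(ltW s0) //= ler_ndivrMr // mul1r.
  by rewrite divfK ?lt_eqF // -opprB E sub0r mulrN opprK mulrC.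
- have [c /andP[] + + E] := MVT_segment (ltW s0) (fun t _ => psid t) (psic _ _).
  rewrite !bnd_simp => c0 cs; exists (c / s).
    by rewrite divr_ge0 ?(ltW s0) //= ler_pdivrMr // mul1r.
  by rewrite divfK ?gt_eqF // E subr0 mulrC.
Qed.

Lemma mx_mean_value_le p q (y dy : R -> 'M[R]_(p, q)) a b K : a <= b -> 0 <= K ->
  {within `[a, b], continuous y} ->
  (forall t, a < t < b -> is_derive t 1 y (dy t)) ->
  (forall t, a < t < b -> `|dy t| <= K) ->
  `|y b - y a| <= K * (b - a).
Proof.
move=> ab K0 yc yd dyK; apply: mx_norm_le => [|i j]; first by rewrite mulr_ge0 // subr_ge0.
have [<-|ab'] := eqVneq a b; first by rewrite !subrr mxE normr0 mulr0.
have {}ab' : a < b by rewrite lt_neqAle ab' ab.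
have yijd t : t \in `]a, b[ -> is_derive t 1 (fun t => y t i j) (dy t i j).
  by rewrite in_itv /= => /yd; exact: is_derive_mx_entry.
have yijc : {within `[a, b], continuous (fun t => y t i j)}.
  move=> t; apply: (@continuous_comp (subspace `[a, b]) _ _ y (fun M => M i j) t (yc t)).
  exact: coord_continuous.
have [c] := MVT ab' yijd yijc; rewrite in_itv /= => /dyK cb E.
rewrite !mxE E normrM [`|b - a|]ger0_norm ?subr_ge0 // ler_wpM2r ?subr_ge0 //.
exact: le_trans (mx_entry_le_norm _ _ _) cb.
Qed.

End MeanValue.

Section Staircase.
Variable R : realType.

(* Directional derivatives are not assumed to be linear in the direction, so
   increments of a function are computed coordinate by coordinate along the
   staircase from e to a: stair e a t takes its first t coordinates from a. *)
Definition stair n (e a : 'cV[R]_n) (t : nat) : 'cV[R]_n :=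
  \col_l (if (l < t)%N then a l 0 else e l 0).

Definition in_box n (e a z : 'cV[R]_n) :=
  forall l, exists2 w : R, 0 <= w <= 1 & z l 0 = e l 0 + w * (a l 0 - e l 0).

Lemma stair0 n (e a : 'cV[R]_n) : stair e a 0 = e.
Proof. by apply/matrixP => l z; rewrite mxE ord1. Qed.

Lemma stairn n (e a : 'cV[R]_n) : stair e a n = a.
Proof. by apply/matrixP => l z; rewrite mxE ord1 ltn_ord. Qed.

Lemma stair_shift n (e a : 'cV[R]_n) (k : 'I_n) th l :
  (stair e a k + (th * (a k 0 - e k 0)) *: delta_mx k 0) l 0
  = if (l < k)%N then a l 0 else if l == k then e l 0 + th * (a l 0 - e l 0) else e l 0.
Proof.
rewrite !mxE eqxx andbT; case: ltngtP => [lk|kl|/val_inj ->].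
- by rewrite -val_eqE /= (ltn_eqF lk) mulr0 addr0.
- by rewrite -val_eqE /= (gtn_eqF kl) mulr0 addr0.
- by rewrite eqxx mulr1.
Qed.

Lemma stairS n (e a : 'cV[R]_n) (k : 'I_n) :
  stair e a k.+1 = stair e a k + (a k 0 - e k 0) *: delta_mx k 0.
Proof.
apply/matrixP => l z; rewrite ord1 -[a k 0 - e k 0]mul1r stair_shift mxE ltnS leq_eqVlt.
case: ltngtP => [lk|kl|/val_inj ->]; first by rewrite orbT.
  by rewrite -val_eqE /= (gtn_eqF kl).
by rewrite eqxx mul1r addrC subrK.
Qed.

Lemma in_box_stair_shift n (e a : 'cV[R]_n) (k : 'I_n) th : 0 <= th <= 1 ->
  in_box e a (stair e a k + (th * (a k 0 - e k 0)) *: delta_mx k 0).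
Proof.
move=> th01 l; rewrite stair_shift.
case: (l < k)%N; first by exists 1; rewrite ?lexx ?ler01 // mul1r addrC subrK.
by case: eqVneq => _; [exists th | exists 0; rewrite ?lexx ?ler01 // mul0r addr0].
Qed.

Lemma in_box_norm_le n (e a z : 'cV[R]_n) rho :
  `|e| <= rho -> `|a| <= rho -> in_box e a z -> `|z| <= rho.
Proof.
move=> he ha hz; apply: mx_norm_le => [|l j]; first exact: le_trans (normr_ge0 _) he.
rewrite ord1; have [w /andP[w0 w1] ->] := hz l.
have -> : e l 0 + w * (a l 0 - e l 0) = (1 - w) * e l 0 + w * a l 0 by ring.
apply: le_trans (ler_normD _ _) _.
rewrite !normrM (ger0_norm w0) ger0_norm ?subr_ge0 //.
have -> : rho = (1 - w) * rho + w * rho by ring.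
apply: lerD; apply: ler_wpM2l; rewrite ?subr_ge0 //;
  exact: le_trans (mx_entry_le_norm _ _ _) _.
Qed.

Lemma in_box_dist n (a b xi eta : 'cV[R]_n) l : 0 <= l <= 1 ->
  in_box (l *: a + (1 - l) *: b) a xi -> in_box (l *: a + (1 - l) *: b) b eta ->
  `|xi - eta| <= `|a - b|.
Proof.
move=> /andP[l0 l1] hxi heta; apply: mx_norm_le => // k z; rewrite ord1.
have [w /andP[w0 w1] xik] := hxi k; have [w' /andP[w0' w1'] etak] := heta k.
have -> : (xi - eta) k 0 = (w * (1 - l) + w' * l) * (a - b) k 0.
  by rewrite !mxE xik etak !mxE; ring.
rewrite normrM ger0_norm ?addr_ge0 ?mulr_ge0 ?subr_ge0 //.
apply: le_trans (mx_entry_le_norm (a - b) k 0); apply: ler_piMl => //.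
apply: le_trans (_ : 1 * (1 - l) + 1 * l <= 1); last by rewrite !mul1r subrK.
by apply: lerD; apply: ler_wpM2r; rewrite ?subr_ge0.
Qed.

Lemma telescope_norm_le (Phi beta : nat -> R) N : Phi 0%N = 0 ->
  (forall k, (k < N)%N -> `|Phi k.+1 - Phi k| <= beta k) ->
  `|Phi N| <= \sum_(k < N) beta k.
Proof.
move=> Phi0 step.
have -> : Phi N = \sum_(k < N) (Phi k.+1 - Phi k).
  by rewrite -(big_mkord xpredT (fun k => Phi k.+1 - Phi k)) telescope_sumr // Phi0 subr0.
by apply: le_trans (ler_norm_sum _ _ _) _; apply: ler_sum => k _; exact: step.
Qed.

Section Partials.
Variables (n p q : nat) (F : 'cV[R]_n -> 'M[R]_(p, q)).
Hypothesis F_partial : forall y (k : 'I_n), derivable F y (delta_mx k 0).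

Lemma stair_step_mvt (e a : 'cV[R]_n) (k : 'I_n) i j :
  exists2 y, in_box e a y &
    (F (stair e a k.+1) - F (stair e a k)) i j
    = (a k 0 - e k 0) * ('D_(delta_mx k 0) F y) i j.
Proof.
rewrite stairS.
have [th th01 ->] := mvt_along_line (x := stair e a k) (a k 0 - e k 0) i j
  (fun t => @F_partial _ k).
by eexists; first exact: in_box_stair_shift th01.
Qed.

Lemma lipschitz_of_partials rho C (a e : 'cV[R]_n) : 0 <= C ->
  (forall y (k : 'I_n), `|y| <= rho -> `|'D_(delta_mx k 0) F y| <= C) ->
  `|a| <= rho -> `|e| <= rho -> `|F a - F e| <= n%:R * C * `|a - e|.
Proof.
move=> C0 HC ha he; apply: mx_norm_le => [|i j]; first by rewrite !mulr_ge0.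
have := @telescope_norm_le (fun t => (F (stair e a t) - F e) i j) (fun=> C * `|a - e|) n.
rewrite stair0 stairn sumr_const card_ord mulr_natl -mulrnAl mulrC; apply.
  by rewrite subrr mxE.
move=> k kn; pose k' := Ordinal kn.
have -> : (F (stair e a k.+1) - F e) i j - (F (stair e a k) - F e) i j
          = (F (stair e a k'.+1) - F (stair e a k')) i j by rewrite !mxE /=; ring.
have [y hy ->] := stair_step_mvt e a k' i j.
rewrite normrM ler_pM //.
  by rewrite (_ : a k' 0 - e k' 0 = (a - e) k' 0) ?mx_entry_le_norm // !mxE.
exact: le_trans (mx_entry_le_norm _ _ _) (HC y k' (in_box_norm_le he ha hy)).
Qed.

End Partials.

Section SecondPartials.
Variables (n p q : nat) (F : 'cV[R]_n -> 'M[R]_(p, q)) (rho C : R).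
Hypothesis F_partial : forall y (k : 'I_n), derivable F y (delta_mx k 0).
Hypothesis F_partial2 :
  forall y (k k' : 'I_n), derivable ('D_(delta_mx k 0) F) y (delta_mx k' 0).
Hypothesis C_ge0 : 0 <= C.
Hypothesis F_partial2_bound : forall y (k k' : 'I_n), `|y| <= rho ->
  `|'D_(delta_mx k' 0) ('D_(delta_mx k 0) F) y| <= C.

(* As l (a - e) + (1 - l) (b - e) = 0, the first-order terms cancel and only a
   difference of partial derivatives at points at most |a - b| apart remains. *)
Lemma stair_defect_step (a b e : 'cV[R]_n) l (k : 'I_n) i j :
  `|a| <= rho -> `|b| <= rho -> 0 <= l <= 1 -> e = l *: a + (1 - l) *: b ->
  `|l * (F (stair e a k.+1) - F (stair e a k)) i j
    + (1 - l) * (F (stair e b k.+1) - F (stair e b k)) i j|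
  <= l * (1 - l) * `|a - b| * (n%:R * C * `|a - b|).
Proof.
move=> ha hb l01 ee; have /andP[l0 l1] := l01.
have he : `|e| <= rho by rewrite ee; exact: convex_comb_norm_le.
have [xi hxi ->] := stair_step_mvt F_partial e a k i j.
have [eta heta ->] := stair_step_mvt F_partial e b k i j.
set D := 'D_(delta_mx k 0) F.
have -> : l * ((a k 0 - e k 0) * D xi i j) + (1 - l) * ((b k 0 - e k 0) * D eta i j)
          = l * (1 - l) * (a - b) k 0 * (D xi - D eta) i j by rewrite ee !mxE; ring.
rewrite normrM normrM ger0_norm ?mulr_ge0 ?subr_ge0 //.
apply: ler_pM; rewrite ?mulr_ge0 ?subr_ge0 //.
  by apply: ler_wpM2l; rewrite ?mulr_ge0 ?subr_ge0 ?mx_entry_le_norm.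
apply: le_trans (mx_entry_le_norm _ i j) _.
apply: le_trans (lipschitz_of_partials (F := D) (@F_partial2 ^~ k) C_ge0
  (fun y k' => @F_partial2_bound y k k') (in_box_norm_le he ha hxi) (in_box_norm_le he hb heta)) _.
by rewrite ee in hxi heta; rewrite ler_wpM2l ?mulr_ge0 // (in_box_dist l01 hxi heta).
Qed.

Lemma convex_defect_of_second_partials (a b : 'cV[R]_n) l :
  `|a| <= rho -> `|b| <= rho -> 0 <= l <= 1 ->
  `|l *: F a + (1 - l) *: F b - F (l *: a + (1 - l) *: b)|
  <= n%:R ^+ 2 * C * (l * (1 - l)) * `|a - b| ^+ 2.
Proof.
move=> ha hb l01; set e := l *: a + (1 - l) *: b.
apply: mx_norm_le => [|i j]; first by rewrite !mulr_ge0 ?subr_ge0 //; case/andP: l01.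
pose Phi (t : nat) := l * (F (stair e a t) - F e) i j + (1 - l) * (F (stair e b t) - F e) i j.
have -> : (l *: F a + (1 - l) *: F b - F e) i j = Phi n.
  by rewrite /Phi !stairn !mxE; ring.
have -> : n%:R ^+ 2 * C * (l * (1 - l)) * `|a - b| ^+ 2
          = \sum_(k < n) (l * (1 - l) * `|a - b| * (n%:R * C * `|a - b|)).
  by rewrite sumr_const card_ord -mulr_natl; ring.
apply: (@telescope_norm_le Phi (fun=> l * (1 - l) * `|a - b| * (n%:R * C * `|a - b|)))
  => [|k kn]; first by rewrite /Phi !stair0 !subrr !mxE; ring.
pose k' := Ordinal kn.
have -> : Phi k.+1 - Phi k = l * (F (stair e a k'.+1) - F (stair e a k')) i j
          + (1 - l) * (F (stair e b k'.+1) - F (stair e b k')) i j by rewrite /Phi !mxE /=; ring.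
exact: stair_defect_step.
Qed.

End SecondPartials.

End Staircase.

Section Smooth.
Variable R : realType.

Lemma iter_dirder_rcons (V W : normedModType R) vs v (F : V -> W) :
  iter_dirder vs ('D_v F) = iter_dirder (rcons vs v) F.
Proof. by elim: vs => //= w vs ->. Qed.

Lemma smooth_dirder (V W : normedModType R) (F : V -> W) v :
  smooth F -> smooth ('D_v F).
Proof. by move=> sF vs; rewrite iter_dirder_rcons; exact: sF. Qed.

Lemma smooth_continuous (V W : normedModType R) (F : V -> W) :
  smooth F -> continuous F.
Proof. by move=> /(_ [::]) []. Qed.

Lemma smooth_derivable (V W : normedModType R) (F : V -> W) :
  smooth F -> forall x v, derivable F x v.
Proof. by move=> /(_ [::]) []. Qed.

Variables (n p q : nat) (F : 'cV[R]_n -> 'M[R]_(p, q)) (rho : R).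
Hypothesis sF : smooth F.

Lemma smooth_lipschitz_on_ball : exists2 L, 0 <= L &
  forall a b, `|a| <= rho -> `|b| <= rho -> `|F a - F b| <= L * `|a - b|.
Proof.
have [C C0 HC] := continuous_family_bounded_on_ball rho
  (G := fun k : 'I_n => 'D_(delta_mx k 0) F)
  (fun k => smooth_continuous (smooth_dirder _ sF)).
exists (n%:R * C); first by rewrite mulr_ge0.
move=> a b ha hb.
have Fd y (k : 'I_n) : derivable F y (delta_mx k 0) by exact: smooth_derivable.
exact: (@lipschitz_of_partials _ _ _ _ F Fd rho C a b C0 (fun y k => HC k y) ha hb).
Qed.

Lemma smooth_convex_defect_on_ball : exists2 D, 0 <= D &
  forall a b l, `|a| <= rho -> `|b| <= rho -> 0 <= l <= 1 ->
  `|l *: F a + (1 - l) *: F b - F (l *: a + (1 - l) *: b)|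
  <= D * (l * (1 - l)) * `|a - b| ^+ 2.
Proof.
have [C C0 HC] := continuous_family_bounded_on_ball rho
  (G := fun kk : 'I_n * 'I_n => 'D_(delta_mx kk.2 0) ('D_(delta_mx kk.1 0) F))
  (fun kk => smooth_continuous (smooth_dirder _ (smooth_dirder _ sF))).
exists (n%:R ^+ 2 * C); first by rewrite mulr_ge0 ?exprn_ge0.
move=> a b l ha hb l01.
apply: (convex_defect_of_second_partials (F := F) (rho := rho)) => // y k.
- exact: smooth_derivable.
- move=> k'; exact/smooth_derivable/smooth_dirder.
- move=> k'; exact: (HC (k, k')).
Qed.

End Smooth.

Section SmallTime.
Variable R : realType.

Lemma continuous_within_subitv (V : topologicalType) (f : R -> V) a b a' b' :
  a <= a' -> b' <= b -> {within `[a, b], continuous f} -> {within `[a', b'], continuous f}.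
Proof.
move=> aa' b'b; apply: continuous_subspaceW => t /=; rewrite !in_itv /= => /andP[a't tb'].
by rewrite (le_trans aa' a't) (le_trans tb' b'b).
Qed.

Lemma ode_solution_restrict n (F : 'cV[R]_n -> 'cV[R]_n) x0 T T' y :
  T' <= T -> ode_solution F x0 T y -> ode_solution F x0 T' y.
Proof.
move=> T'T [y0 [yc yd]]; split => //; split.
  exact: continuous_within_subitv (lexx 0) T'T yc.
by move=> t /andP[t0 tT']; apply: yd; rewrite t0 (lt_le_trans tT' T'T).
Qed.

Lemma small_time_gronwall p q (y dy : R -> 'M[R]_(p, q)) T L B :
  0 <= L -> L * T <= 2^-1 -> 0 <= B -> y 0 = 0 ->
  {within `[0, T], continuous y} ->
  (forall t, 0 < t < T -> is_derive t 1 y (dy t)) ->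
  (forall t, 0 < t < T -> `|dy t| <= L * `|y t| + B) ->
  forall t, 0 <= t <= T -> `|y t| <= 2 * B * t.
Proof.
move=> L0 LT B0 y0 yc yd dyB t /andP[t0 tT].
have normyc : {within `[0, t], continuous (fun s => `|y s|)}.
  move=> s; apply: (@continuous_comp (subspace `[0, t]) _ _ y Num.norm s).
    exact: continuous_within_subitv (lexx 0) tT yc s.
  exact: norm_continuous.
(* Bound the increment of y up to a point c where |y| is maximal on [0, t]. *)
have [c] := EVT_max t0 normyc; rewrite in_itv /= => /andP[c0 ct] cmax.
set M := `|y c|.
have yM s : 0 <= s <= t -> `|y s| <= M by move=> s0t; apply: cmax; rewrite in_itv.
have M0 : 0 <= M by exact: normr_ge0.
have HM : M <= (L * M + B) * c.
  have := @mx_mean_value_le _ _ _ y dy 0 c (L * M + B) c0 _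
    (continuous_within_subitv (lexx 0) (le_trans ct tT) yc).
  rewrite y0 !subr0; apply; first by rewrite addr_ge0 ?mulr_ge0.
  - move=> s /andP[s0 sc]; apply: yd.
    by rewrite s0 (lt_le_trans sc (le_trans ct tT)).
  - move=> s /andP[s0 sc]; apply: le_trans (dyB s _) _.
      by rewrite s0 (lt_le_trans sc (le_trans ct tT)).
    by rewrite lerD2r ler_wpM2l // yM // (ltW s0) (ltW (lt_le_trans sc ct)).
have HMt : (L * M + B) * c <= (L * M + B) * t by rewrite ler_wpM2l ?addr_ge0 ?mulr_ge0.
have LMt : L * M * t <= 2^-1 * M.
  by rewrite mulrAC ler_wpM2r //; apply: le_trans LT; exact: ler_wpM2l.
have : M <= 2 * B * t by lra.
by apply: le_trans; apply: yM; rewrite t0 lexx.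
Qed.

Lemma continuity_argument (phi : R -> R) T c r : c < r ->
  {within `[0, T], continuous phi} ->
  (forall s, 0 <= s <= T -> (forall t, 0 <= t < s -> phi t < r) -> phi s <= c) ->
  forall s, 0 <= s <= T -> phi s < r.
Proof.
move=> cr phic Hphi s sT; rewrite ltNge; apply/negP => rs.
pose A := [set z | 0 <= z <= T /\ r <= phi z].
have Alb : has_lbound A by exists 0 => z [/andP[]].
have Ainf : has_inf A by split => //; exists s.
set s0 := inf A.
have s00 : 0 <= s0 by apply: lb_le_inf; [exists s | move=> z [/andP[]]].
have s0T : s0 <= T.
  by apply: le_trans (ge_inf Alb (conj sT rs)) _; case/andP: sT.
have phis0 : phi s0 <= c.
  apply: Hphi => [|t /andP[t0 ts0]]; first by rewrite s00.
  rewrite ltNge; apply/negP => rt.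
  have At : A t by split => //; rewrite t0 (ltW (lt_le_trans ts0 s0T)).
  by have := ge_inf Alb At; rewrite leNgt ts0.
have [d d0 Hd] : exists2 d, 0 < d &
    forall z, 0 <= z <= T -> `|s0 - z| < d -> `|phi s0 - phi z| < r - c.
  have := (@subspace_continuousP _ `[0, T] _ phi).1 phic s0.
  rewrite /= in_itv /= s00 s0T => /(_ isT) /cvgrPdist_lt /(_ (r - c)).
  rewrite subr_gt0 => /(_ cr) /nbhs_ballP [d d0 Hd]; exists d => // z z0T zd.
  by apply: (Hd z) => //; rewrite /= in_itv /= z0T.
have [s1 [s10T rs1] s1d] := inf_adherent d0 Ainf.
have s0s1 : s0 <= s1 by exact: ge_inf.
have : `|phi s0 - phi s1| < r - c.
  by apply: Hd => //; rewrite distrC ger0_norm ?subr_ge0 // ltrBlDl.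
rewrite ltr_norml => /andP[+ _]; lra.
Qed.

Lemma ode_solution_in_ball n (F : 'cV[R]_n -> 'cV[R]_n) x0 T y M rho :
  0 <= M -> M * T <= 2^-1 -> `|x0| <= rho ->
  (forall z, `|z| <= rho + 1 -> `|F z| <= M) ->
  ode_solution F x0 T y -> forall t, 0 <= t <= T -> `|y t| <= rho + 1.
Proof.
move=> M0 MT hx0 FM sol.
have near_x0 t : `|y t - x0| < 1 -> `|y t| <= rho + 1.
  move=> yt; rewrite -(subrK x0 (y t)) addrC; apply: le_trans (ler_normD _ _) _.
  by rewrite lerD // ltW.
suff H : forall t, 0 <= t <= T -> `|y t - x0| < 1 by move=> t /H; exact: near_x0.
have [_ [yc _]] := sol.
apply: (@continuity_argument (fun t => `|y t - x0|) T 2^-1 1) => //; first lra.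
  move=> s; apply: (@continuous_comp (subspace `[0, T]) _ _ (fun t => y t - x0) Num.norm s).
    by apply: continuousB; [exact: yc | exact: cst_continuous].
  exact: norm_continuous.
move=> s /andP[s0 sT] below.
have [y0 [ycs yds]] := ode_solution_restrict sT sol.
rewrite -y0; apply: le_trans (mx_mean_value_le s0 M0 ycs yds _) _.
  by move=> t /andP[t0 ts]; apply/FM/near_x0/below; rewrite (ltW t0) ts.
by rewrite subr0; apply: le_trans MT; exact: ler_wpM2l.
Qed.

End SmallTime.

Section ControlAffineField.
Variables (R : realType) (n m : nat).
Variables (f0 : 'cV[R]_n -> 'cV[R]_n) (g : 'cV[R]_n -> 'M[R]_(n, m)).
Variables (rho rU Mf Mg Lf Lg Df Dg : R).
Hypotheses (Mg_ge0 : 0 <= Mg) (Lf_ge0 : 0 <= Lf) (Lg_ge0 : 0 <= Lg).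
Hypotheses (Df_ge0 : 0 <= Df) (Dg_ge0 : 0 <= Dg) (rU_ge0 : 0 <= rU).
Hypothesis f0_bound : forall z, `|z| <= rho -> `|f0 z| <= Mf.
Hypothesis g_bound : forall z, `|z| <= rho -> `|g z| <= Mg.
Hypothesis f0_lip : forall a b, `|a| <= rho -> `|b| <= rho ->
  `|f0 a - f0 b| <= Lf * `|a - b|.
Hypothesis g_lip : forall a b, `|a| <= rho -> `|b| <= rho ->
  `|g a - g b| <= Lg * `|a - b|.
Hypothesis f0_defect : forall a b l, `|a| <= rho -> `|b| <= rho -> 0 <= l <= 1 ->
  `|l *: f0 a + (1 - l) *: f0 b - f0 (l *: a + (1 - l) *: b)|
  <= Df * (l * (1 - l)) * `|a - b| ^+ 2.
Hypothesis g_defect : forall a b l, `|a| <= rho -> `|b| <= rho -> 0 <= l <= 1 ->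
  `|l *: g a + (1 - l) *: g b - g (l *: a + (1 - l) *: b)|
  <= Dg * (l * (1 - l)) * `|a - b| ^+ 2.

Lemma field_norm_le z u : `|z| <= rho -> `|u| <= rU ->
  `|f0 z + g z *m u| <= Mf + m%:R * Mg * rU.
Proof.
move=> hz hu; apply: le_trans (ler_normD _ _) _; rewrite lerD ?f0_bound //.
by apply: le_trans (mulmx_norm_le _ _) _; rewrite ler_pM ?mulr_ge0 // ler_wpM2l // g_bound.
Qed.

Lemma field_diff_le a b u v : `|a| <= rho -> `|b| <= rho -> `|u| <= rU ->
  `|f0 a + g a *m u - (f0 b + g b *m v)|
  <= (Lf + m%:R * Lg * rU) * `|a - b| + m%:R * Mg * `|u - v|.
Proof.
move=> ha hb hu.
have -> : f0 a + g a *m u - (f0 b + g b *m v)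
          = (f0 a - f0 b) + (g a - g b) *m u + g b *m (u - v).
  (* Abstracting the matrix products leaves an entrywise ring identity. *)
  rewrite mulmxBl mulmxBr; move: (g a *m u) (g b *m u) (g b *m v) => X Y Z.
  by apply/matrixP => i j; rewrite !mxE; ring.
rewrite mulrDl; apply: le_trans (ler_normD _ _) _; apply: lerD; last first.
  by apply: le_trans (mulmx_norm_le _ _) _; rewrite ler_wpM2r // ler_wpM2l // g_bound.
apply: le_trans (ler_normD _ _) _; apply: lerD; first exact: f0_lip.
apply: le_trans (mulmx_norm_le _ _) _.
have -> : m%:R * Lg * rU * `|a - b| = m%:R * (Lg * `|a - b|) * rU by ring.
by rewrite ler_pM ?mulr_ge0 // ler_wpM2l // g_lip.
Qed.

Lemma field_defect_le a b c u v l E :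
  `|a| <= rho -> `|b| <= rho -> `|c| <= rho -> `|u| <= rU -> `|v| <= rU ->
  0 <= l <= 1 -> `|a - b| <= E ->
  `|l *: (f0 a + g a *m u) + (1 - l) *: (f0 b + g b *m v)
    - (f0 c + g c *m (l *: u + (1 - l) *: v))|
  <= (Lf + m%:R * Lg * rU) * `|l *: a + (1 - l) *: b - c|
     + l * (1 - l) * ((Df + m%:R * Dg * rU) * E ^+ 2 + m%:R * Lg * E * `|u - v|).
Proof.
move=> ha hb hc hu hv l01 abE; have /andP[l0 l1] := l01.
have l1' : 0 <= 1 - l by rewrite subr_ge0.
set e := l *: a + (1 - l) *: b; set w := l *: u + (1 - l) *: v.
have he : `|e| <= rho by exact: convex_comb_norm_le.
have hw : `|w| <= rU by exact: convex_comb_norm_le.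
have -> : l *: (f0 a + g a *m u) + (1 - l) *: (f0 b + g b *m v) - (f0 c + g c *m w)
  = (l *: f0 a + (1 - l) *: f0 b - f0 e) + (l *: g a + (1 - l) *: g b - g e) *m u
    + (1 - l) *: ((g b - g e) *m (v - u)) + (f0 e - f0 c) + (g e - g c) *m w.
  rewrite /w ?mulmxDl ?mulmxDr ?mulNmx ?mulmxN -?scalemxAl -?scalemxAr.
  move: (g a *m u) (g b *m u) (g b *m v) (g e *m u) (g e *m v) (g c *m u) (g c *m v).
  by move=> X1 X2 X3 X4 X5 X6 X7; apply/matrixP => i j; rewrite !mxE; ring.
have E0 : 0 <= E := le_trans (normr_ge0 _) abE.
have E2 : `|a - b| ^+ 2 <= E ^+ 2 by apply: lerXn2r; rewrite ?nnegrE.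
have llE : 0 <= l * (1 - l) by rewrite mulr_ge0.
have hbe : `|b - e| <= l * E.
  have -> : b - e = l *: (b - a) by rewrite /e; apply/matrixP => i j; rewrite !mxE; ring.
  by rewrite normrZ ger0_norm // distrC ler_wpM2l.
have -> : (Lf + m%:R * Lg * rU) * `|e - c|
    + l * (1 - l) * ((Df + m%:R * Dg * rU) * E ^+ 2 + m%:R * Lg * E * `|u - v|)
  = Df * (l * (1 - l)) * E ^+ 2 + m%:R * (Dg * (l * (1 - l)) * E ^+ 2) * rU
    + (1 - l) * (m%:R * (Lg * (l * E)) * `|u - v|)
    + Lf * `|e - c| + m%:R * (Lg * `|e - c|) * rU by ring.
have b1 : `|l *: f0 a + (1 - l) *: f0 b - f0 e| <= Df * (l * (1 - l)) * E ^+ 2.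
  by apply: le_trans (f0_defect ha hb l01) _; rewrite ler_wpM2l ?mulr_ge0.
have b2 : `|(l *: g a + (1 - l) *: g b - g e) *m u|
          <= m%:R * (Dg * (l * (1 - l)) * E ^+ 2) * rU.
  apply: le_trans (mulmx_norm_le _ _) _; rewrite ler_pM ?mulr_ge0 // ler_wpM2l //.
  by apply: le_trans (g_defect ha hb l01) _; rewrite ler_wpM2l ?mulr_ge0.
have b3 : `|(1 - l) *: ((g b - g e) *m (v - u))|
          <= (1 - l) * (m%:R * (Lg * (l * E)) * `|u - v|).
  rewrite normrZ ger0_norm // ler_wpM2l //.
  apply: le_trans (mulmx_norm_le _ _) _; rewrite [`|v - u|]distrC ler_wpM2r //.
  by rewrite ler_wpM2l // (le_trans (g_lip hb he)) // ler_wpM2l.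
have b4 : `|f0 e - f0 c| <= Lf * `|e - c| by exact: f0_lip.
have b5 : `|(g e - g c) *m w| <= m%:R * (Lg * `|e - c|) * rU.
  by apply: le_trans (mulmx_norm_le _ _) _; rewrite ler_pM ?mulr_ge0 // ler_wpM2l // g_lip.
by do 4 (apply: le_trans (ler_normD _ _) _; apply: lerD => //).
Qed.

Section Trajectories.
Variables (x : 'cV[R]_n) (h l : R) (u v : 'cV[R]_m) (yu yv yw : R -> 'cV[R]_n).
Hypotheses (hu : `|u| <= rU) (hv : `|v| <= rU) (l01 : 0 <= l <= 1).
Hypotheses (h_ge0 : 0 <= h) (h_le1 : h <= 1).
Hypothesis L1h : (Lf + m%:R * Lg * rU) * h <= 2^-1.
Hypothesis yu_sol : ode_solution (fun z => f0 z + g z *m u) x h yu.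
Hypothesis yv_sol : ode_solution (fun z => f0 z + g z *m v) x h yv.
Hypothesis yw_sol :
  ode_solution (fun z => f0 z + g z *m (l *: u + (1 - l) *: v)) x h yw.
Hypothesis yu_ball : forall t, 0 <= t <= h -> `|yu t| <= rho.
Hypothesis yv_ball : forall t, 0 <= t <= h -> `|yv t| <= rho.
Hypothesis yw_ball : forall t, 0 <= t <= h -> `|yw t| <= rho.

Lemma trajectory_gap t : 0 <= t <= h ->
  `|yu t - yv t| <= 2 * (m%:R * Mg * `|u - v|) * t.
Proof.
have [yu0 [yuc yud]] := yu_sol; have [yv0 [yvc yvd]] := yv_sol.
apply: (small_time_gronwall (y := fun t => yu t - yv t)
  (dy := fun t => f0 (yu t) + g (yu t) *m u - (f0 (yv t) + g (yv t) *m v)) _ L1h).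
- by rewrite addr_ge0 ?mulr_ge0.
- by rewrite mulr_ge0 ?mulr_ge0.
- by rewrite yu0 yv0 subrr.
- by move=> s; apply: continuousB; [exact: yuc | exact: yvc].
- by move=> s sh; apply: is_deriveB; [exact: yud | exact: yvd].
move=> s /andP[s0 sh]; have s0h : 0 <= s <= h by rewrite !ltW.
by apply: field_diff_le; [exact: yu_ball | exact: yv_ball | exact: hu].
Qed.

Lemma trajectory_defect :
  `|l *: yu h + (1 - l) *: yv h - yw h|
  <= 2 * ((Df + m%:R * Dg * rU) * (4 * m%:R ^+ 2 * Mg ^+ 2) + 2 * m%:R ^+ 2 * Lg * Mg)
       * (l * (1 - l) * `|u - v| ^+ 2) * h ^+ 2.
Proof.
have [yu0 [yuc yud]] := yu_sol; have [yv0 [yvc yvd]] := yv_sol.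
have [yw0 [ywc ywd]] := yw_sol; have /andP[l0 l1] := l01.
set E := 2 * (m%:R * Mg * `|u - v|) * h.
have E0 : 0 <= E by rewrite !mulr_ge0.
have gapE t : 0 <= t <= h -> `|yu t - yv t| <= E.
  move=> t0h; apply: le_trans (trajectory_gap t0h) _.
  by rewrite ler_wpM2l ?mulr_ge0 //; case/andP: t0h.
set B := l * (1 - l) * ((Df + m%:R * Dg * rU) * E ^+ 2 + m%:R * Lg * E * `|u - v|).
have B0 : 0 <= B.
  apply: mulr_ge0; first by rewrite mulr_ge0 ?subr_ge0.
  by rewrite ?(addr_ge0, mulr_ge0, exprn_ge0).
have Y2 : `|l *: yu h + (1 - l) *: yv h - yw h| <= 2 * B * h.
  apply: (@small_time_gronwall _ _ _ (fun t => l *: yu t + (1 - l) *: yv t - yw t)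
    (fun t => l *: (f0 (yu t) + g (yu t) *m u) + (1 - l) *: (f0 (yv t) + g (yv t) *m v)
              - (f0 (yw t) + g (yw t) *m (l *: u + (1 - l) *: v))) h _ B _ L1h B0).
  - by rewrite ?(addr_ge0, mulr_ge0).
  - by rewrite yu0 yv0 yw0 -scalerDl addrCA subrr addr0 scale1r subrr.
  - move=> t; apply: continuousB (ywc t).
    by apply: continuousD; apply: continuousZl_tmp; [exact: yuc | exact: yvc].
  - move=> t th; apply: is_deriveB (ywd t th).
    by apply: is_deriveD; apply: is_deriveZ; [exact: yud | exact: yvd].
  - move=> t /andP[t0 th]; have t0h : 0 <= t <= h by rewrite !ltW.
    by apply: field_defect_le; rewrite ?yu_ball ?yv_ball ?yw_ball //; exact: gapE.
  - by rewrite h_ge0 lexx.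
apply: le_trans Y2 _.
have -> : 2 * B * h = 2 * ((Df + m%:R * Dg * rU) * (4 * m%:R ^+ 2 * Mg ^+ 2) * h
          + 2 * m%:R ^+ 2 * Lg * Mg) * (l * (1 - l) * `|u - v| ^+ 2) * h ^+ 2.
  by rewrite /B /E; ring.
rewrite ler_wpM2r ?exprn_ge0 // ler_wpM2r ?mulr_ge0 ?exprn_ge0 ?subr_ge0 //.
by rewrite ler_wpM2l // lerD2r ler_piMr // !mulr_ge0 ?addr_ge0 ?mulr_ge0 ?exprn_ge0.
Qed.

End Trajectories.
End ControlAffineField.

Lemma hamiltonian_convex_comb_le (R : realType) n m
    (phi : R -> 'cV[R]_n -> 'cV[R]_m -> 'cV[R]_n) (Q : 'M[R]_n) (Rw : 'M[R]_m)
    h x p u v l r rP K :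
  0 < h -> 0 <= l <= 1 -> 0 <= K -> (forall d, r * `|d| ^+ 2 <= qform Rw d) ->
  `|p| <= rP -> n%:R * rP * K * h <= r ->
  `|l *: phi h x u + (1 - l) *: phi h x v - phi h x (l *: u + (1 - l) *: v)|
    <= K * (l * (1 - l) * `|u - v| ^+ 2) * h ^+ 2 ->
  hamiltonian phi Q Rw h x (l *: u + (1 - l) *: v) p
    <= l * hamiltonian phi Q Rw h x u p + (1 - l) * hamiltonian phi Q Rw h x v p.
Proof.
move=> h0 /andP[l0 l1] K0 Rw_coer hp small defect.
set w := l *: u + (1 - l) *: v; set s := l * (1 - l) * `|u - v| ^+ 2.
have s0 : 0 <= s by rewrite /s !mulr_ge0 ?subr_ge0 ?exprn_ge0.
have dot_ge : - (n%:R * (K * s * h ^+ 2) * rP)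
              <= l * dotcv (phi h x u) p + (1 - l) * dotcv (phi h x v) p - dotcv (phi h x w) p.
  rewrite -dotcv_convex_comb lerNl; apply: le_trans (ler_norm _) _; rewrite normrN.
  apply: le_trans (dotcv_norm_le _ _) _.
  by rewrite ler_pM ?mulr_ge0 ?exprn_ge0 // ?(ltW h0) // ler_wpM2l.
have q_ge : h * (r * s)
            <= h * (l * qform Rw u + (1 - l) * qform Rw v - qform Rw w).
  rewrite ler_wpM2l ?(ltW h0) // qform_convex_comb /s mulrCA.
  by rewrite ler_wpM2l ?mulr_ge0 ?subr_ge0.
have dot_small : n%:R * (K * s * h ^+ 2) * rP <= h * (r * s).
  have -> : n%:R * (K * s * h ^+ 2) * rP = (n%:R * rP * K * h) * (h * s) by ring.
  have -> : h * (r * s) = r * (h * s) by ring.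
  by rewrite ler_wpM2r // mulr_ge0 // ltW.
rewrite /hamiltonian; lra.
Qed.

Lemma exists_small_step (R : realType) (cs : seq R) : exists2 h1 : R, 0 < h1 &
  forall h c, 0 <= h <= h1 -> c \in cs -> c * h <= 2^-1.
Proof.
pose Z := 1 + \sum_(c <- cs) `|c|.
have Z0 : 0 < Z by rewrite ltr_pwDl ?sumr_ge0.
exists (2 * Z)^-1 => [|h c /andP[h0 hZ] cs_c]; first by rewrite invr_gt0 mulr_gt0.
have cZ : c <= Z.
  apply: le_trans (ler_norm c) _; rewrite /Z (big_rem c) //=.
  by rewrite addrCA lerDl addr_ge0 ?sumr_ge0.
apply: le_trans (ler_wpM2r h0 cZ) _; apply: le_trans (ler_wpM2l (ltW Z0) hZ) _.
by rewrite invfM mulrCA mulfV ?gt_eqF // mulr1.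
Qed.

Unset Implicit Arguments. Set Strict Implicit.

Theorem proposition3 (R : realType) (n m : nat)
    (f0 : 'cV[R]_n -> 'cV[R]_n) (g : 'cV[R]_n -> 'M[R]_(n, m))
    (X : set 'cV[R]_n) (U : set 'cV[R]_m) (P : set 'cV[R]_n)
    (hbar : R) (phi : R -> 'cV[R]_n -> 'cV[R]_m -> 'cV[R]_n)
    (Q : 'M[R]_n) (Rw : 'M[R]_m) :
  smooth f0 -> smooth g ->
  f0 0 + g 0 *m 0 = 0 ->
  open X -> bounded_set X -> X 0 ->
  open U -> bounded_set U -> U 0 -> convex_set_in U ->
  open P -> bounded_set P -> P 0 ->
  0 < hbar ->
  (forall x0 u0, X x0 -> U u0 ->
     ode_solution (fun x => f0 x + g x *m u0) x0 hbar (fun t => phi t x0 u0) /\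
     (forall y, ode_solution (fun x => f0 x + g x *m u0) x0 hbar y ->
        forall t, 0 <= t <= hbar -> y t = phi t x0 u0)) ->
  psd Q -> pd Rw ->
  exists h1 : R, 0 < h1 /\
    forall h : R, 0 < h -> h <= h1 -> h <= hbar ->
      forall x p, X x -> P p ->
        convex_fun_on U (fun u => hamiltonian phi Q Rw h x u p).
Proof.
(* Q drops out of the defect since the state cost does not depend on u. *)
move=> sf0 sg _ _ bX _ _ bU _ cU _ bP _ _ Hode _ Rw_pd.
have [rX rX0 HX] := bounded_set_norm_le bX; have [rU rU0 HU] := bounded_set_norm_le bU.
have [rP rP0 HP] := bounded_set_norm_le bP; have [r r0 Rw_coer] := pd_coercive Rw_pd.
pose rho := rX + 1.
have [Mf Mf0 f0_bound] := continuous_bounded_on_ball rho (smooth_continuous sf0).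
have [Mg Mg0 g_bound] := continuous_bounded_on_ball rho (smooth_continuous sg).
have [Lf Lf0 f0_lip] := smooth_lipschitz_on_ball rho sf0.
have [Lg Lg0 g_lip] := smooth_lipschitz_on_ball rho sg.
have [Df Df0 f0_defect] := smooth_convex_defect_on_ball rho sf0.
have [Dg Dg0 g_defect] := smooth_convex_defect_on_ball rho sg.
pose M := Mf + m%:R * Mg * rU; pose L := Lf + m%:R * Lg * rU.
pose K := 2 * ((Df + m%:R * Dg * rU) * (4 * m%:R ^+ 2 * Mg ^+ 2) + 2 * m%:R ^+ 2 * Lg * Mg).
have [h1 h10 small] := exists_small_step [:: 1; M; L; n%:R * rP * K / r].
exists h1; split => // h h0 hh1 hhbar x p Xx Pp u v l Uu Uv l01.
have small_h c : c \in [:: 1; M; L; n%:R * rP * K / r] -> c * h <= 2^-1.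
  by apply: small; rewrite (ltW h0) hh1.
have traj w : U w -> ode_solution (fun z => f0 z + g z *m w) x h (fun t => phi t x w) /\
                     forall t, 0 <= t <= h -> `|phi t x w| <= rho.
  move=> Uw; have sol := ode_solution_restrict hhbar (Hode x w Xx Uw).1; split => //.
  apply: (ode_solution_in_ball (M := M)) sol; rewrite ?HX ?small_h ?inE ?eqxx ?orbT //.
    by rewrite addr_ge0 ?mulr_ge0.
  by move=> z hz; apply: (field_norm_le f0_bound g_bound) => //; exact: HU.
have [solu ballu] := traj u Uu; have [solv ballv] := traj v Uv.
have [solw ballw] := traj _ (cU u v l Uu Uv l01).
apply: (@hamiltonian_convex_comb_le _ _ _ phi Q Rw h x p u v l r rP K); rewrite ?HP //.
- by rewrite ?(mulr_ge0, addr_ge0, exprn_ge0).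
- have := small_h (n%:R * rP * K / r); rewrite !inE eqxx !orbT => /(_ isT).
  by rewrite mulrAC ler_pdivrMr // => ?; lra.
apply: (trajectory_defect Mg0 Lf0 Lg0 Df0 Dg0 rU0 g_bound f0_lip g_lip f0_defect g_defect
  _ _ l01 (ltW h0) _ _ solu solv solw ballu ballv ballw); rewrite ?HU //.
- by have := small_h 1; rewrite mul1r !inE eqxx => /(_ isT) ?; lra.
- by apply: (small_h L); rewrite !inE eqxx !orbT.
Qed.
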